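(* The map $\psi\colon G/M\to\mathfrak P$, $gM\mapsto(g\omega_-,g\omega_+,go)$, is a homeomorphism.
   Context: Let $q\ge2$ and $\mathfrak G=(\mathfrak X,\mathfrak E)$ the $(q+1)$-regular tree with vertex set $\mathfrak X$ (discrete) and graph distance $d$. The boundary $\Omega$ is the set of infinite non-backtracking edge chains modulo ''eventually equal up to shift'', with the topology generated by the sets $\partial_+\vec e$ of classes of chains starting with the directed edge $\vec e$. For $\omega_1\ne\omega_2$ in $\Omega$, $]\omega_1,\omega_2[$ denotes the vertex set of the geodesic joining them. Fix a vertex $o$ and $\omega_-\neq\omega_+$ in $\Omega$ with $o\in]\omega_-,\omega_+[$. $G=\mathrm{Aut}(\mathfrak G)$ carries the topology of pointwise convergence on $\mathfrak X$ (basic neighbourhoods $\{h:hx=g_0x\ \forall x\in F\}$, $F\subseteq\mathfrak X$ finite) and acts on $\Omega$. $M=\{\gamma\in G:\gamma$ fixes every vertex of $]\omega_-,\omega_+[\}$ (a subgroup of $\mathrm{Stab}_G(o)$); $G/M$ has the quotient topology. $\mathfrak P$ is the set of triples $(\omega_1,\omega_2,x)\in\Omega\times\Omega\times\mathfrak X$ with $\omega_1\ne\omega_2$ and $x\in]\omega_1,\omega_2[$, with the subspace topology. *)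

From Stdlib Require Import Arith Lia ZArith List Classical
  FunctionalExtensionality PropExtensionality.



Definition Topology (T : Type) := (T -> Prop) -> Prop.

Definition generated {T : Type} (S : (T -> Prop) -> Prop) : Topology T :=
  fun U => forall x, U x ->
    exists l : list (T -> Prop),
      Forall S l /\ (forall B, In B l -> B x) /\
      (forall y, (forall B, In B l -> B y) -> U y).

Definition discrete_top (T : Type) : Topology T := fun _ => True.

Definition prod_top {A B : Type} (tA : Topology A) (tB : Topology B) : Topology (A * B) :=
  generated (fun W => (exists U, tA U /\ W = (fun p => U (fst p))) \/
                      (exists V, tB V /\ W = (fun p => V (snd p)))).

Definition subspace_top {T : Type} (t : Topology T) (P : T -> Prop) : Topology {x : T | P x} :=
  fun V => exists U, t U /\ forall x, V x <-> U (proj1_sig x).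

Definition quotient_top {A B : Type} (t : Topology A) (pi : A -> B) : Topology B :=
  fun V => t (fun a => V (pi a)).

Definition continuous_top {A B : Type} (tA : Topology A) (tB : Topology B) (f : A -> B) :=
  forall V, tB V -> tA (fun a => V (f a)).

Definition homeomorphism {A B : Type} (tA : Topology A) (tB : Topology B) (f : A -> B) :=
  exists g : B -> A, (forall a, g (f a) = a) /\ (forall b, f (g b) = b) /\
    continuous_top tA tB f /\ continuous_top tB tA g.

Section Tree.
Variable X : Type.
Variable adj : X -> X -> Prop.

Definition is_walk (n : nat) (p : nat -> X) := forall i, i < n -> adj (p i) (p (S i)).

Definition regular_tree (q : nat) : Prop :=
  (forall x y, adj x y -> adj y x) /\
  (forall x, ~ adj x x) /\
  (forall x y, exists n p, is_walk n p /\ p 0 = x /\ p n = y) /\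
  (forall n p, 1 <= n -> is_walk n p -> (forall i, i + 2 <= n -> p (i + 2) <> p i) ->
     p 0 <> p n) /\
  (forall x, exists l, NoDup l /\ length l = q + 1 /\ forall y, adj x y <-> In y l).

(** Infinite non-backtracking edge chains, encoded by their vertex sequences. *)
Definition is_ray (v : nat -> X) :=
  forall n, adj (v n) (v (S n)) /\ v (S (S n)) <> v n.

Definition ray_equiv (v w : nat -> X) := exists k l, forall n, v (n + k) = w (n + l).

Definition ray_class (v : nat -> X) : (nat -> X) -> Prop :=
  fun w => is_ray w /\ ray_equiv v w.

Definition Omega := {A : (nat -> X) -> Prop | exists v, is_ray v /\ A = ray_class v}.

Definition bd_plus (x y : X) : Omega -> Prop :=
  fun w => exists v, proj1_sig w v /\ v 0 = x /\ v 1 = y.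

Definition omega_top : Topology Omega :=
  generated (fun W => exists x y, adj x y /\ W = bd_plus x y).

(** Vertices of the geodesic ]w1,w2[ : vertices of a bi-infinite non-backtracking
    line whose backward half lies in w1 and forward half lies in w2. *)
Definition is_line (u : Z -> X) :=
  forall z, adj (u z) (u (z + 1)%Z) /\ u (z + 2)%Z <> u z.

Definition geodesic (w1 w2 : Omega) (x : X) : Prop :=
  exists u, is_line u /\ proj1_sig w1 (fun n => u (- Z.of_nat n)%Z) /\
    proj1_sig w2 (fun n => u (Z.of_nat n)) /\ exists z, u z = x.

(** Automorphism group with the topology of pointwise convergence. *)
Definition is_aut (g : X -> X) :=
  (exists h : X -> X, (forall x, h (g x) = x) /\ (forall x, g (h x) = x)) /\
  (forall x y, adj x y <-> adj (g x) (g y)).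

Definition Aut := {g : X -> X | is_aut g}.

Definition aut_top : Topology Aut :=
  fun U => forall g, U g -> exists F : list X,
    forall h : Aut, (forall x, In x F -> proj1_sig h x = proj1_sig g x) -> U h.

Definition act_pred (g : X -> X) (A : (nat -> X) -> Prop) : (nat -> X) -> Prop :=
  fun w => is_ray w /\ exists v, A v /\ ray_equiv (fun n => g (v n)) w.

Lemma ray_equiv_refl v : ray_equiv v v.
Proof. exists 0, 0; auto. Qed.

Lemma ray_equiv_trans u v w : ray_equiv u v -> ray_equiv v w -> ray_equiv u w.
Proof.
  intros [k [l H1]] [k' [l' H2]]. exists (k' + k), (l + l'). intros n.
  replace (n + (k' + k)) with ((n + k') + k) by lia. rewrite H1.
  replace (n + k' + l) with ((n + l) + k') by lia. rewrite H2. f_equal; lia.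
Qed.

Lemma ray_equiv_map (g : X -> X) v w : ray_equiv v w ->
  ray_equiv (fun n => g (v n)) (fun n => g (w n)).
Proof. intros [k [l H]]. exists k, l. intros n. now rewrite H. Qed.

Lemma act_class (g : X -> X) (hg : is_aut g) (A : (nat -> X) -> Prop)
  (hA : exists v, is_ray v /\ A = ray_class v) :
  exists v, is_ray v /\ act_pred g A = ray_class v.
Proof.
  destruct hA as [v0 [hv0 ->]]. destruct hg as [[h [hK _]] hadj].
  exists (fun n => g (v0 n)). split.
  - intros n. destruct (hv0 n) as [a b]. split.
    + now apply (proj1 (hadj _ _)).
    + intros E. apply b. rewrite <- (hK (v0 (S (S n)))), E. apply hK.
  - apply functional_extensionality; intros w. apply propositional_extensionality.
    unfold act_pred, ray_class. split.
    + intros [hw [v [[_ e1] e2]]]. split; auto.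
      apply ray_equiv_trans with (fun n => g (v n)); auto.
      now apply ray_equiv_map.
    + intros [hw e]. split; auto. exists v0. split; [split; auto; apply ray_equiv_refl|auto].
Qed.

Definition act (g : Aut) (w : Omega) : Omega :=
  exist _ (act_pred (proj1_sig g) (proj1_sig w))
        (act_class (proj1_sig g) (proj2_sig g) (proj1_sig w) (proj2_sig w)).

Section Cosets.
Variables wm wp : Omega.

Definition M_stab (m : Aut) : Prop :=
  forall x, geodesic wm wp x -> proj1_sig m x = x.

Definition coset_pred (g : Aut) : Aut -> Prop :=
  fun h => exists m, M_stab m /\ forall x, proj1_sig h x = proj1_sig g (proj1_sig m x).

Definition GmodM := {C : Aut -> Prop | exists g, C = coset_pred g}.

Definition coset (g : Aut) : GmodM := exist _ (coset_pred g) (ex_intro _ g eq_refl).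

Definition GmodM_top : Topology GmodM := quotient_top aut_top coset.
End Cosets.

Definition P_pred (t : Omega * Omega * X) : Prop :=
  fst (fst t) <> snd (fst t) /\ geodesic (fst (fst t)) (snd (fst t)) (snd t).

Definition Pspace := {t : Omega * Omega * X | P_pred t}.

Definition P_top : Topology Pspace :=
  subspace_top (prod_top (prod_top omega_top omega_top) (discrete_top X)) P_pred.

End Tree.

Arguments regular_tree {X} adj q.
Arguments Omega {X} adj.
Arguments geodesic {X} adj w1 w2 x.
Arguments Aut {X} adj.
Arguments act {X adj} g w.
Arguments GmodM {X} adj wm wp.
Arguments coset {X} adj wm wp g.
Arguments GmodM_top {X} adj wm wp.
Arguments Pspace {X} adj.
Arguments P_top {X} adj.

(* Fix a line [u0] through [o] with backward end [wm] and forward end [wp].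
   A coset [gM] is determined by the line [z |-> g (u0 z)], and a line by its
   ends and the image of [o]; hence [psi] is well defined and injective.

   Automorphisms are built from labelings: a root together with an ordering of
   the neighbours of every vertex away from the root gives each vertex an
   address, and identifying equal addresses for two rooted labelings is an
   automorphism.  Steering a labeling along a target line so that its two rays
   get the addresses of the rays of [u0] yields an automorphism carrying [u0]
   onto that line: [psi] is onto.  If moreover the target line agrees with
   [z |-> g (u0 z)] on [[-N-1, N+1]] and the labeling is transported along [g],
   steering changes nothing at depth below [N], so the automorphism agrees with
   [g] on the ball of radius [N].  The cylinders [bd_plus] at distance [N] on
   both ends form a neighbourhood basis of [P], so this is the continuity of the
   inverse of [psi].  Continuity of [psi] holds because whether [g w] lies in a
   cylinder [bd_plus a b] depends on [g] at two vertices only. *)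

From Stdlib Require Import ZArith List Lia Classical ClassicalEpsilon
  FunctionalExtensionality PropExtensionality FinFun.
Import ListNotations.

Section RegularTree.
Variables (X : Type) (adj : X -> X -> Prop) (q : nat).
Hypothesis htree : regular_tree adj q.

(** * Non-backtracking walks *)

Lemma adj_sym x y : adj x y -> adj y x.
Proof. destruct htree as [h _]. apply h. Qed.

Definition nb_walk (n : nat) (p : nat -> X) :=
  is_walk X adj n p /\ forall i, i + 2 <= n -> p (i + 2) <> p i.

Lemma nb_walk_le n m p : nb_walk n p -> m <= n -> nb_walk m p.
Proof. intros [hw hnb] hm; split; intros i hi; [apply hw | apply hnb]; lia. Qed.

Lemma nb_walk_not_closed n p : 1 <= n -> nb_walk n p -> p 0 <> p n.
Proof. destruct htree as [_ [_ [_ [h _]]]]. intros hn [hw hnb]. now apply h. Qed.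

Definition snoc (p : nat -> X) (n : nat) (z : X) : nat -> X :=
  fun i => if i <=? n then p i else z.

Lemma snoc_le p n z i : i <= n -> snoc p n z i = p i.
Proof. unfold snoc. destruct (Nat.leb_spec i n); [auto | lia]. Qed.

Lemma snoc_last p n z : snoc p n z (S n) = z.
Proof. unfold snoc. destruct (Nat.leb_spec (S n) n); [lia | auto]. Qed.

Lemma nb_walk_snoc n p z : nb_walk n p -> adj (p n) z -> (1 <= n -> p (n - 1) <> z) ->
  nb_walk (S n) (snoc p n z).
Proof.
  intros [hw hnb] ha hback; split; intros i hi.
  - destruct (Nat.eq_dec i n) as [->|hin].
    + rewrite snoc_le, snoc_last; auto.
    + rewrite !snoc_le by lia. apply hw; lia.
  - destruct (Nat.eq_dec (i + 2) (S n)) as [e|hin].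
    + rewrite e, snoc_last, snoc_le by lia. replace i with (n - 1) by lia.
      intros ->. now apply hback; [lia|].
    + rewrite !snoc_le by lia. apply hnb; lia.
Qed.

(* Two non-backtracking walks from a common start to a common end whose last
   steps differ would splice (the second one reversed) into a cycle. *)
Lemma nb_walk_last_step n p m p' : nb_walk (S n) p -> nb_walk (S m) p' ->
  p 0 = p' 0 -> p (S n) = p' (S m) -> p n = p' m.
Proof.
  intros [hw hnb] [hw' hnb'] h0 hend. apply NNPP; intros hne.
  set (T := S n + S m).
  set (c := fun i => if i <=? S n then p i else p' (T - i)).
  assert (clo : forall i, i <= S n -> c i = p i).
  { intros i hi; unfold c. destruct (Nat.leb_spec i (S n)); [auto | lia]. }
  assert (chi : forall i, S n <= i -> c i = p' (T - i)).
  { intros i hi; unfold c. destruct (Nat.leb_spec i (S n)); [|auto].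
    replace i with (S n) by lia. rewrite hend. f_equal. unfold T; lia. }
  apply (nb_walk_not_closed T c); [unfold T; lia | split | ].
  - intros i hi. destruct (Nat.leb_spec (S i) (S n)).
    + rewrite !clo by lia. apply hw; lia.
    + rewrite !chi by lia. apply adj_sym.
      replace (T - i) with (S (T - S i)) by (unfold T; lia). apply hw'. unfold T; lia.
  - intros i hi. destruct (Nat.leb_spec (i + 2) (S n)).
    + rewrite !clo by lia. apply hnb; lia.
    + destruct (Nat.eq_dec i n) as [->|hin].
      * rewrite chi, clo by lia. replace (T - (n + 2)) with m by (unfold T; lia). auto.
      * rewrite !chi by lia. replace (T - i) with ((T - (i + 2)) + 2) by (unfold T; lia).
        intros e. apply (hnb' (T - (i + 2))); [unfold T; lia | auto].
  - rewrite clo, chi by lia. replace (T - T) with 0 by lia. auto.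
Qed.

Lemma nb_walk_unique : forall n p m p', nb_walk n p -> nb_walk m p' ->
  p 0 = p' 0 -> p n = p' m -> n = m /\ forall i, i <= n -> p i = p' i.
Proof.
  induction n as [|n IH]; intros p [|m] p' hp hp' h0 hn.
  - split; auto. intros i hi. replace i with 0 by lia. auto.
  - exfalso. apply (nb_walk_not_closed (S m) p'); [lia | auto | congruence].
  - exfalso. apply (nb_walk_not_closed (S n) p); [lia | auto | congruence].
  - destruct (IH p m p') as [-> e]; auto.
    + apply (nb_walk_le (S n)); auto.
    + apply (nb_walk_le (S m)); auto.
    + now apply nb_walk_last_step.
    + split; auto. intros i hi. destruct (Nat.eq_dec i (S m)) as [->|]; auto.
      apply e; lia.
Qed.

Lemma walk_reduce n p : is_walk X adj n p ->
  exists k r, nb_walk k r /\ r 0 = p 0 /\ r k = p n.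
Proof.
  induction n as [|n IH]; intros hw.
  - exists 0, p. split; [split; intros i hi; lia | auto].
  - destruct IH as [k [r [hr [r0 rk]]]]; [intros i hi; apply hw; lia|].
    destruct (classic (1 <= k /\ r (k - 1) = p (S n))) as [[hk e]|hne].
    + exists (k - 1), r. split; [apply (nb_walk_le k); auto; lia | auto].
    + exists (S k), (snoc r k (p (S n))). split; [|split].
      * apply nb_walk_snoc; [auto | rewrite rk; apply hw; lia | intros hk e; now apply hne].
      * now rewrite snoc_le by lia.
      * apply snoc_last.
Qed.

Lemma nb_walk_exists x y : exists n p, nb_walk n p /\ p 0 = x /\ p n = y.
Proof.
  destruct htree as [_ [_ [hc _]]]. destruct (hc x y) as [n [p [hw [<- <-]]]].
  apply walk_reduce; auto.
Qed.

(** * Lines and rays *)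

Definition fwd (u : Z -> X) : nat -> X := fun n => u (Z.of_nat n).
Definition back (u : Z -> X) : nat -> X := fun n => u (- Z.of_nat n)%Z.

Lemma line_segment u s n : is_line X adj u -> nb_walk n (fun i => u (s + Z.of_nat i)%Z).
Proof.
  intros hu; split; intros i hi; destruct (hu (s + Z.of_nat i)%Z) as [ha hb].
  - replace (s + Z.of_nat (S i))%Z with (s + Z.of_nat i + 1)%Z by lia. auto.
  - replace (s + Z.of_nat (i + 2))%Z with (s + Z.of_nat i + 2)%Z by lia. auto.
Qed.

Lemma line_inj u z1 z2 : is_line X adj u -> u z1 = u z2 -> z1 = z2.
Proof.
  intros hu e.
  assert (H : forall a b, (a < b)%Z -> u a <> u b).
  { intros a b hab eab. apply (nb_walk_not_closed (Z.to_nat (b - a)) _ ltac:(lia)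
      (line_segment u a _ hu)). cbn beta.
    now replace (a + Z.of_nat (Z.to_nat (b - a)))%Z with b by lia; rewrite Z.add_0_r. }
  destruct (Z.lt_trichotomy z1 z2) as [h|[h|h]]; auto.
  - now destruct (H _ _ h e).
  - now destruct (H _ _ h).
Qed.

Lemma ray_nb_walk r n : is_ray X adj r -> nb_walk n r.
Proof.
  intros hr; split; intros i _; [apply hr|].
  replace (i + 2) with (S (S i)) by lia. apply hr.
Qed.

Lemma ray_inj r i j : is_ray X adj r -> r i = r j -> i = j.
Proof. intros hr e. now destruct (nb_walk_unique i r j r); auto using ray_nb_walk. Qed.

Lemma ray_shift r N : is_ray X adj r -> is_ray X adj (fun n => r (n + N)).
Proof. intros hr n. apply hr. Qed.

Lemma fwd_ray u : is_line X adj u -> is_ray X adj (fwd u).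
Proof.
  intros hu n. unfold fwd. destruct (hu (Z.of_nat n)) as [a b].
  replace (Z.of_nat (S n)) with (Z.of_nat n + 1)%Z by lia.
  replace (Z.of_nat (S (S n))) with (Z.of_nat n + 2)%Z by lia. auto.
Qed.

Lemma back_ray u : is_line X adj u -> is_ray X adj (back u).
Proof.
  intros hu n. unfold back. destruct (hu (- Z.of_nat (S (S n)))%Z) as [a b]. split.
  - apply adj_sym. destruct (hu (- Z.of_nat (S n)))%Z as [a' _].
    now replace (- Z.of_nat n)%Z with (- Z.of_nat (S n) + 1)%Z by lia.
  - now replace (- Z.of_nat n)%Z with (- Z.of_nat (S (S n)) + 2)%Z by lia.
Qed.

(** * Labelings and addresses *)

Definition branching (p : option X) := match p with None => S q | Some _ => q end.

Definition parent_ok (p : option X) (y : X) :=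
  p = None \/ exists p0, p = Some p0 /\ adj y p0.

(* A labeling lists, for a vertex [y] entered from [p] ([None] at the root),
   the neighbours of [y] other than [p] in some order.  A rooted labeling
   addresses every vertex by a code; codes are read right to left, the head
   being the index of the last step. *)
Definition labeling (L : option X -> X -> list X) := forall p y, parent_ok p y ->
  NoDup (L p y) /\ (forall z, In z (L p y) <-> adj y z /\ Some z <> p) /\
  length (L p y) = branching p.

Definition ray_parent (R : nat -> X) (n : nat) : option X :=
  match n with 0 => None | S m => Some (R m) end.

Fixpoint decode (x : X) L (c : list nat) : option X * X :=
  match c with
  | [] => (None, x)
  | a :: c' => let d := decode x L c' in (Some (snd d), nth a (L (fst d) (snd d)) (snd d))
  end.

Definition code_bound (c : list nat) := match c with [] => S q | _ => q end.

Fixpoint valid_code (c : list nat) : Prop :=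
  match c with [] => True | a :: c' => valid_code c' /\ a < code_bound c' end.

Fixpoint code_walk (x : X) L (c : list nat) (i : nat) : X :=
  match c with
  | [] => x
  | a :: c' => if i <=? length c' then code_walk x L c' i else snd (decode x L (a :: c'))
  end.

Section Decode.
Variables (x : X) (L : option X -> X -> list X).
Hypothesis HL : labeling L.

Lemma code_walk_0 c : code_walk x L c 0 = x.
Proof. induction c; simpl; auto. Qed.

Lemma code_walk_cons_le a c i : i <= length c -> code_walk x L (a :: c) i = code_walk x L c i.
Proof. intros h. cbn [code_walk]. destruct (Nat.leb_spec i (length c)); [auto | lia]. Qed.

Lemma code_walk_last c : code_walk x L c (length c) = snd (decode x L c).
Proof.
  destruct c as [|a c]; [reflexivity|]. cbn [code_walk length].
  destruct (Nat.leb_spec (S (length c)) (length c)); [lia | reflexivity].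
Qed.

Lemma code_walk_cons_last a c : code_walk x L (a :: c) (length c) = snd (decode x L c).
Proof. rewrite code_walk_cons_le, code_walk_last; auto. Qed.

Lemma branching_decode c : branching (fst (decode x L c)) = code_bound c.
Proof. destruct c; reflexivity. Qed.

Lemma decode_parent_ok c : parent_ok (fst (decode x L c)) (snd (decode x L c)) ->
  forall a, a < code_bound c ->
  adj (snd (decode x L c)) (snd (decode x L (a :: c))) /\
  Some (snd (decode x L (a :: c))) <> fst (decode x L c).
Proof.
  intros he a ha. destruct (HL _ _ he) as [_ [hin hlen]]. apply hin, nth_In.
  now rewrite hlen, branching_decode.
Qed.

Lemma decode_walk c : valid_code c ->
  nb_walk (length c) (code_walk x L c) /\ parent_ok (fst (decode x L c)) (snd (decode x L c)).
Proof.
  induction c as [|a c IH]; intros hv.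
  - split; [split; intros i hi; simpl in hi; lia | now left].
  - destruct hv as [hv ha]. destruct (IH hv) as [hw he].
    destruct (decode_parent_ok c he a ha) as [hadj hnot].
    split; [|right; exists (snd (decode x L c)); split; auto using adj_sym].
    assert (e : code_walk x L (a :: c) =
                snoc (code_walk x L c) (length c) (snd (decode x L (a :: c)))).
    { apply functional_extensionality; intros i. unfold snoc. simpl.
      destruct (Nat.leb_spec i (length c)); auto. }
    rewrite e. apply nb_walk_snoc; [auto | now rewrite code_walk_last|].
    intros hc. destruct c as [|b c']; [simpl in hc; lia|].
    simpl length; replace (S (length c') - 1) with (length c') by lia.
    rewrite code_walk_cons_last. intros E. apply hnot. now rewrite <- E.
Qed.

Lemma decode_surj y : exists c, valid_code c /\ snd (decode x L c) = y.
Proof.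
  destruct (nb_walk_exists x y) as [n [r [hr [r0 rn]]]].
  assert (H : forall i, i <= n ->
    exists c, valid_code c /\ length c = i /\ decode x L c = (ray_parent r i, r i)).
  { induction i as [|i IH]; intros hi.
    - exists []. simpl. now rewrite r0.
    - destruct IH as [c [hv [hl hD]]]; [lia|].
      assert (he : parent_ok (ray_parent r i) (r i)).
      { destruct i; [now left | right; exists (r i); split; auto].
        apply adj_sym, (proj1 hr); lia. }
      destruct (HL _ _ he) as [_ [hin hlen]].
      assert (hz : In (r (S i)) (L (ray_parent r i) (r i))).
      { apply hin. split; [apply (proj1 hr); lia|].
        destruct i; simpl; [discriminate|]. intros [= e].
        apply (proj2 hr i); [lia|]. now replace (i + 2) with (S (S i)) by lia. }
      destruct (In_nth _ _ (r i) hz) as [a [ha hna]].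
      assert (ha' : a < code_bound c)
        by (rewrite <- (branching_decode c), hD; cbn [fst]; now rewrite <- hlen).
      exists (a :: c). simpl. rewrite hD. simpl. rewrite hna. repeat split; auto; lia. }
  destruct (H n) as [c [hv [_ hD]]]; auto. exists c. now rewrite hD.
Qed.

Lemma valid_code_ext : forall c c', valid_code c -> valid_code c' -> length c = length c' ->
  (forall i, i <= length c -> code_walk x L c i = code_walk x L c' i) -> c = c'.
Proof.
  induction c as [|a c IH]; intros [|a' c'] hv hv' hl hW; try discriminate; auto.
  injection hl as hl.
  assert (ec : c = c').
  { apply IH; [apply hv | apply hv' | auto |]. intros i hi.
    rewrite <- (code_walk_cons_le a c), <- (code_walk_cons_le a' c') by lia. apply hW; simpl; lia. }
  subst c'. f_equal.
  pose proof (hW (S (length c)) (le_n _)) as e.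
  rewrite !(code_walk_last (_ :: c)) in e. simpl in e.
  destruct (decode_walk c (proj1 hv)) as [_ he]. destruct (HL _ _ he) as [hnd [_ hlen]].
  rewrite (NoDup_nth _ (snd (decode x L c))) in hnd.
  apply hnd; auto; rewrite hlen, branching_decode; [apply hv | apply hv'].
Qed.

Lemma decode_inj c c' : valid_code c -> valid_code c' ->
  snd (decode x L c) = snd (decode x L c') -> c = c'.
Proof.
  intros hv hv' e.
  destruct (nb_walk_unique (length c) (code_walk x L c) (length c') (code_walk x L c'))
    as [h1 h2]; try apply decode_walk; auto.
  - now rewrite !code_walk_0.
  - now rewrite !code_walk_last.
  - now apply valid_code_ext.
Qed.

Lemma decode_cons_adj a c : valid_code (a :: c) ->
  adj (snd (decode x L c)) (snd (decode x L (a :: c))).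
Proof.
  intros [hv ha]. apply (decode_parent_ok c); auto. apply decode_walk; auto.
Qed.

Lemma decode_adj c c' : valid_code c -> valid_code c' ->
  adj (snd (decode x L c)) (snd (decode x L c')) ->
  (exists a, c' = a :: c) \/ (exists a, c = a :: c').
Proof.
  intros hv hv' ha. destruct (decode_walk c hv) as [hw _].
  destruct (classic (1 <= length c /\ code_walk x L c (length c - 1) = snd (decode x L c')))
    as [[h1 E]|E].
  - right. destruct c as [|a c0]; [simpl in h1; lia|]. exists a. f_equal.
    simpl length in E. replace (S (length c0) - 1) with (length c0) in E by lia.
    rewrite code_walk_cons_last in E. apply decode_inj; auto. apply hv.
  - left. set (r := snoc (code_walk x L c) (length c) (snd (decode x L c'))).
    assert (hr : nb_walk (S (length c)) r).
    { apply nb_walk_snoc; [auto | now rewrite code_walk_last |]. intros h e. now apply E. }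
    destruct (nb_walk_unique (S (length c)) r (length c') (code_walk x L c')) as [e1 e2];
      [auto | apply decode_walk; auto | | |].
    + unfold r. now rewrite snoc_le, !code_walk_0 by lia.
    + unfold r. now rewrite snoc_last, code_walk_last.
    + destruct c' as [|a c0]; [discriminate|]. exists a. f_equal.
      simpl in e1. injection e1 as e1. apply decode_inj; [apply hv' | auto |].
      rewrite <- code_walk_cons_last with (a := a), <- e1, <- e2 by lia.
      unfold r. now rewrite snoc_le, code_walk_last.
Qed.

End Decode.

Definition encode (x : X) L (y : X) : list nat :=
  epsilon (inhabits []) (fun c => valid_code c /\ snd (decode x L c) = y).

Lemma encode_spec x L y : labeling L ->
  valid_code (encode x L y) /\ snd (decode x L (encode x L y)) = y.
Proof. intros HL. unfold encode. apply epsilon_spec, decode_surj; auto. Qed.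

Lemma encode_decode x L c : labeling L -> valid_code c -> encode x L (snd (decode x L c)) = c.
Proof.
  intros HL hv. destruct (encode_spec x L (snd (decode x L c)) HL) as [h1 h2].
  apply (decode_inj x L); auto.
Qed.

Definition relabel x0 L0 x1 L1 (y : X) : X := snd (decode x1 L1 (encode x0 L0 y)).

Lemma relabel_decode x0 L0 x1 L1 c : labeling L0 -> valid_code c ->
  relabel x0 L0 x1 L1 (snd (decode x0 L0 c)) = snd (decode x1 L1 c).
Proof. intros HL hv. unfold relabel. now rewrite encode_decode. Qed.

Lemma relabel_adj x0 L0 x1 L1 c c' : labeling L0 -> labeling L1 -> valid_code c -> valid_code c' ->
  adj (snd (decode x0 L0 c)) (snd (decode x0 L0 c')) ->
  adj (snd (decode x1 L1 c)) (snd (decode x1 L1 c')).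
Proof.
  intros H0 H1 hv hv' ha.
  destruct (decode_adj x0 L0 H0 _ _ hv hv' ha) as [[a ->]|[a ->]].
  - now apply decode_cons_adj.
  - now apply adj_sym, decode_cons_adj.
Qed.

Lemma relabel_aut x0 L0 x1 L1 : labeling L0 -> labeling L1 -> is_aut X adj (relabel x0 L0 x1 L1).
Proof.
  intros H0 H1. split.
  - exists (relabel x1 L1 x0 L0). split; intros y.
    + destruct (encode_spec x0 L0 y H0) as [hv hy].
      unfold relabel at 2. now rewrite relabel_decode.
    + destruct (encode_spec x1 L1 y H1) as [hv hy].
      unfold relabel at 2. now rewrite relabel_decode.
  - intros y z. destruct (encode_spec x0 L0 y H0) as [hv <-], (encode_spec x0 L0 z H0) as [hv' <-].
    rewrite !relabel_decode by auto. split; apply relabel_adj; auto.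
Qed.

Definition transport (g gi : X -> X) L : option X -> X -> list X :=
  fun p y => map g (L (option_map gi p) (gi y)).

Section Transport.
Variables (g gi : X -> X).
Hypothesis hgl : forall x, gi (g x) = x.
Hypothesis hgr : forall x, g (gi x) = x.
Hypothesis hga : forall x y, adj x y <-> adj (g x) (g y).

Lemma transport_labeling L : labeling L -> labeling (transport g gi L).
Proof.
  intros HL p y he.
  assert (he' : parent_ok (option_map gi p) (gi y)).
  { destruct he as [->|[p0 [-> h]]]; [now left | right].
    exists (gi p0); split; auto. apply hga. now rewrite !hgr. }
  assert (hopt : forall z, Some z <> p <-> Some (gi z) <> option_map gi p).
  { intros z. destruct p as [p0|]; simpl; [|split; discriminate].
    split; intros hn [= e]; apply hn; f_equal; [rewrite <- (hgr z), e | rewrite <- e]; auto. }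
  destruct (HL _ _ he') as [h1 [h2 h3]]. unfold transport. split; [|split].
  - apply Injective_map_NoDup; auto. intros a b e. now rewrite <- (hgl a), <- (hgl b), e.
  - intros z. rewrite in_map_iff, hopt. split.
    + intros [w [<- hw]]. apply h2 in hw as [hw1 hw2]. rewrite hgl. split; auto.
      rewrite <- (hgr y). apply (hga (gi y) w). exact hw1.
    + intros [hz1 hz2]. exists (gi z). split; [apply hgr|]. apply h2. split; auto.
      apply hga. now rewrite !hgr.
  - rewrite length_map, h3. now destruct p.
Qed.

Lemma decode_transport L x c :
  decode (g x) (transport g gi L) c = (option_map g (fst (decode x L c)), g (snd (decode x L c))).
Proof.
  induction c as [|a c IH]; simpl; auto.
  rewrite IH. simpl. unfold transport. f_equal.
  replace (option_map gi (option_map g (fst (decode x L c)))) with (fst (decode x L c)).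
  - rewrite hgl. apply map_nth.
  - destruct (fst (decode x L c)); simpl; now rewrite ?hgl.
Qed.

End Transport.

Definition X_eq_dec (a b : X) : {a = b} + {a <> b} := excluded_middle_informative (a = b).

Definition neighbours (y : X) : list X :=
  epsilon (inhabits []) (fun l => NoDup l /\ length l = q + 1 /\ forall z, adj y z <-> In z l).

Lemma neighbours_spec y :
  NoDup (neighbours y) /\ length (neighbours y) = q + 1 /\ forall z, adj y z <-> In z (neighbours y).
Proof. unfold neighbours. apply epsilon_spec. destruct htree as [_ [_ [_ [_ h]]]]. apply h. Qed.

Definition std_labeling (p : option X) (y : X) : list X :=
  match p with None => neighbours y | Some p0 => remove X_eq_dec p0 (neighbours y) end.

Lemma remove_NoDup (l : list X) a : NoDup l -> NoDup (remove X_eq_dec a l).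
Proof.
  induction l as [|b l IH]; intros h; simpl; [constructor|].
  inversion h; subst. destruct (X_eq_dec a b); auto. constructor; auto.
  intros hi. apply in_remove in hi. tauto.
Qed.

Lemma remove_length_NoDup (l : list X) a : NoDup l -> In a l ->
  length (remove X_eq_dec a l) = pred (length l).
Proof.
  induction l as [|b l IH]; intros h hi; simpl; [destruct hi|].
  inversion h; subst. destruct (X_eq_dec a b) as [->|hne].
  - now rewrite notin_remove.
  - destruct hi as [e|hi]; [congruence|]. simpl. rewrite IH; auto.
    destruct l; [destruct hi | auto].
Qed.

Lemma std_labeling_ok : labeling std_labeling.
Proof.
  intros p y he. destruct (neighbours_spec y) as [h1 [h2 h3]].
  destruct he as [->|[p0 [-> hp]]]; simpl.
  - split; auto. split; [|lia]. intros z. rewrite <- h3. split; [|tauto]. split; auto; discriminate.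
  - split; [apply remove_NoDup; auto|]. split.
    + intros z. split.
      * intros hz. apply in_remove in hz. destruct hz as [hz1 hz2].
        split; [now apply h3 | intros [= e]; auto].
      * intros [hz1 hz2]. apply in_in_remove; [intros ->; auto | now apply h3].
    + rewrite remove_length_NoDup, h2; [lia | auto | now apply h3].
Qed.

(** * Automorphisms carrying a line onto a line *)

Definition index_of (z : X) (l : list X) : nat :=
  epsilon (inhabits 0) (fun j => j < length l /\ nth j l z = z).

Lemma index_of_spec z l : In z l -> index_of z l < length l /\ nth (index_of z l) l z = z.
Proof. intros h. unfold index_of. apply epsilon_spec, In_nth; auto. Qed.

Definition swap (a j i : nat) := if i =? a then j else if i =? j then a else i.

Lemma swap_invol a j i : swap a j (swap a j i) = i.
Proof.
  unfold swap. destruct (Nat.eqb_spec i a) as [->|h1].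
  - destruct (Nat.eqb_spec j a); auto. now rewrite Nat.eqb_refl.
  - destruct (Nat.eqb_spec i j) as [->|h2]; [now rewrite Nat.eqb_refl|].
    now rewrite (proj2 (Nat.eqb_neq _ _) h1), (proj2 (Nat.eqb_neq _ _) h2).
Qed.

Lemma swap_lt a j i n : a < n -> j < n -> i < n -> swap a j i < n.
Proof. unfold swap. destruct (Nat.eqb_spec i a), (Nat.eqb_spec i j); lia. Qed.

Definition move_to (z : X) (a : nat) (l : list X) : list X :=
  map (fun i => nth (swap a (index_of z l) i) l z) (seq 0 (length l)).

Lemma move_to_length z a l : length (move_to z a l) = length l.
Proof. unfold move_to. now rewrite length_map, length_seq. Qed.

Lemma move_to_nth z a l k d : k < length l ->
  nth k (move_to z a l) d = nth (swap a (index_of z l) k) l z.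
Proof.
  intros hk. unfold move_to.
  set (f := fun i => nth (swap a (index_of z l) i) l z).
  rewrite (nth_indep _ d (f 0)) by now rewrite length_map, length_seq.
  now rewrite map_nth, seq_nth.
Qed.

Section MoveTo.
Variables (z : X) (a : nat) (l : list X).
Hypothesis hz : In z l.
Hypothesis ha : a < length l.

Lemma move_to_at d : nth a (move_to z a l) d = z.
Proof. rewrite move_to_nth by auto. unfold swap. rewrite Nat.eqb_refl. now apply index_of_spec. Qed.

Lemma move_to_other k d : k < length l -> k <> a -> k <> index_of z l ->
  nth k (move_to z a l) d = nth k l d.
Proof.
  intros hk h1 h2. rewrite move_to_nth by auto. unfold swap.
  destruct (Nat.eqb_spec k a), (Nat.eqb_spec k (index_of z l)); try lia. now apply nth_indep.
Qed.

Lemma move_to_In w : In w (move_to z a l) <-> In w l.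
Proof.
  destruct (index_of_spec z l hz) as [hi _]. split; intros h.
  - destruct (In_nth _ _ w h) as [k [hk <-]]. rewrite move_to_length in hk.
    rewrite move_to_nth by auto. apply nth_In, swap_lt; auto.
  - destruct (In_nth _ _ w h) as [k [hk <-]].
    rewrite (nth_indep _ w z), <- (swap_invol a (index_of z l) k), <- (move_to_nth z a l _ w)
      by (try apply swap_lt; auto).
    apply nth_In. rewrite move_to_length. apply swap_lt; auto.
Qed.

Lemma move_to_NoDup : NoDup l -> NoDup (move_to z a l).
Proof.
  destruct (index_of_spec z l hz) as [hi _].
  rewrite !(NoDup_nth _ z), move_to_length. intros h i j hi' hj e.
  rewrite !move_to_nth in e by auto. apply h in e; try apply swap_lt; auto.
  now rewrite <- (swap_invol a (index_of z l) i), <- (swap_invol a (index_of z l) j), e.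
Qed.

Lemma move_to_id : NoDup l -> nth a l z = z -> move_to z a l = l.
Proof.
  intros hnd e. destruct (index_of_spec z l hz) as [hi e'].
  assert (ej : index_of z l = a).
  { rewrite (NoDup_nth _ z) in hnd. apply hnd; auto. congruence. }
  apply (nth_ext _ _ z z); [apply move_to_length|].
  intros n hn. rewrite move_to_length in hn. rewrite move_to_nth, ej by auto. unfold swap.
  destruct (Nat.eqb_spec n a); subst; auto.
Qed.

End MoveTo.

Lemma move_to_ok z a l (P : X -> Prop) k : In z l -> a < k ->
  NoDup l /\ (forall w, In w l <-> P w) /\ length l = k ->
  NoDup (move_to z a l) /\ (forall w, In w (move_to z a l) <-> P w) /\ length (move_to z a l) = k.
Proof.
  intros hz ha [h1 [h2 <-]]. split; [apply move_to_NoDup; auto|]. split.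
  - intros w. rewrite move_to_In; auto.
  - apply move_to_length.
Qed.

Fixpoint ray_code (A : nat -> nat) (n : nat) : list nat :=
  match n with 0 => [] | S m => A m :: ray_code A m end.

Lemma ray_parent_ok R n : is_ray X adj R -> parent_ok (ray_parent R n) (R n).
Proof.
  intros hr. destruct n; [now left | right].
  eexists; split; [reflexivity|]. apply adj_sym, hr.
Qed.

Lemma branching_ray_parent R R' n : branching (ray_parent R n) = branching (ray_parent R' n).
Proof. destruct n; reflexivity. Qed.

Lemma ray_next_In L R n : labeling L -> is_ray X adj R -> In (R (S n)) (L (ray_parent R n) (R n)).
Proof.
  intros HL hr. destruct (HL _ _ (ray_parent_ok R n hr)) as [_ [h _]]. apply h. split; [apply hr|].
  destruct n; simpl; [discriminate|]. intros [= e]. now apply (proj2 (hr n)).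
Qed.

Definition ray_index L (R : nat -> X) n := index_of (R (S n)) (L (ray_parent R n) (R n)).

Lemma ray_index_spec L R n : labeling L -> is_ray X adj R ->
  ray_index L R n < branching (ray_parent R n) /\
  nth (ray_index L R n) (L (ray_parent R n) (R n)) (R n) = R (S n).
Proof.
  intros HL hr. destruct (index_of_spec _ _ (ray_next_In L R n HL hr)) as [h1 h2].
  destruct (HL _ _ (ray_parent_ok R n hr)) as [_ [_ h3]]. rewrite h3 in h1. split; auto.
  rewrite (nth_indep _ (R n) (R (S n))); auto. now rewrite h3.
Qed.

Lemma decode_ray_code x L R A : is_ray X adj R -> R 0 = x ->
  (forall n, A n < branching (ray_parent R n) /\
             nth (A n) (L (ray_parent R n) (R n)) (R n) = R (S n)) ->
  forall n, valid_code (ray_code A n) /\ decode x L (ray_code A n) = (ray_parent R n, R n).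
Proof.
  intros hr h0 hA. induction n as [|n IH]; [simpl; now rewrite h0|].
  destruct IH as [hv hD]. simpl. rewrite hD. simpl. split.
  - split; auto. destruct (hA n) as [h _]. now destruct n.
  - f_equal. apply hA.
Qed.

Definition ray_step (R : nat -> X) (p : option X) (y : X) (n : nat) :=
  p = Some (R n) /\ y = R (S n).

Definition ray_step_index R p y := epsilon (inhabits 0) (ray_step R p y).

Lemma ray_step_index_eq R p y n : is_ray X adj R -> ray_step R p y n -> ray_step_index R p y = n.
Proof.
  intros hr [-> hy]. unfold ray_step_index.
  destruct (epsilon_spec (inhabits 0) (ray_step R (Some (R n)) y)
    (ex_intro _ n (conj eq_refl hy))) as [e _].
  injection e as e. symmetry. exact (ray_inj R _ _ hr e).
Qed.

Section Steer.
Variables (x : X) (L : option X -> X -> list X) (R1 R2 : nat -> X) (A B : nat -> nat).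
Hypothesis HL : labeling L.
Hypothesis hR1 : is_ray X adj R1.
Hypothesis hR2 : is_ray X adj R2.
Hypothesis hR10 : R1 0 = x.
Hypothesis hR20 : R2 0 = x.
Hypothesis hR12 : forall i j, R1 i = R2 j -> i = 0 /\ j = 0.
Hypothesis hA : forall n, A n < branching (ray_parent R1 n).
Hypothesis hB : forall n, B n < branching (ray_parent R2 n).
Hypothesis hAB : A 0 <> B 0.

Definition steer_root := move_to (R2 1) (B 0) (move_to (R1 1) (A 0) (L None x)).

(* [L] modified along the two rays so that the code [ray_code A] leads along [R1]
   and [ray_code B] along [R2]. *)
Definition steer (p : option X) (y : X) : list X :=
  if excluded_middle_informative (p = None /\ y = x) then steer_root
  else if excluded_middle_informative (exists n, ray_step R1 p y n) then
    move_to (R1 (S (S (ray_step_index R1 p y)))) (A (S (ray_step_index R1 p y))) (L p y)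
  else if excluded_middle_informative (exists n, ray_step R2 p y n) then
    move_to (R2 (S (S (ray_step_index R2 p y)))) (B (S (ray_step_index R2 p y))) (L p y)
  else L p y.

Lemma steer_cases p y : steer p y = L p y \/ (p = None /\ y = x /\ steer p y = steer_root) \/
  (exists n, ray_step R1 p y n /\ steer p y = move_to (R1 (S (S n))) (A (S n)) (L p y)) \/
  (exists n, ray_step R2 p y n /\ steer p y = move_to (R2 (S (S n))) (B (S n)) (L p y)).
Proof.
  unfold steer. destruct (excluded_middle_informative (p = None /\ y = x)) as [h|_].
  { right; left; tauto. }
  destruct (excluded_middle_informative (exists n, ray_step R1 p y n)) as [[n h1]|_].
  { right; right; left. exists n. now rewrite (ray_step_index_eq R1 p y n). }
  destruct (excluded_middle_informative (exists n, ray_step R2 p y n)) as [[n h2]|_].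
  { right; right; right. exists n. now rewrite (ray_step_index_eq R2 p y n). }
  now left.
Qed.

Lemma root_has_R1 : In (R1 1) (L None x).
Proof.
  destruct (HL None x (or_introl eq_refl)) as [_ [h2 _]].
  apply h2. split; [rewrite <- hR10; apply hR1 | discriminate].
Qed.

Lemma root_has_R2 : In (R2 1) (move_to (R1 1) (A 0) (L None x)).
Proof.
  destruct (HL None x (or_introl eq_refl)) as [_ [h2 h3]].
  apply move_to_In; [apply root_has_R1 | rewrite h3; apply (hA 0)|].
  apply h2. split; [rewrite <- hR20; apply hR2 | discriminate].
Qed.

Lemma steer_labeling : labeling steer.
Proof.
  intros p y he. destruct (HL _ _ he) as [h1 [h2 h3]].
  destruct (steer_cases p y) as [->|[[-> [-> ->]]|[[n [[-> ->] ->]]|[n [[-> ->] ->]]]]].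
  - auto.
  - apply move_to_ok; [apply root_has_R2 | apply (hB 0) |].
    apply move_to_ok; [apply root_has_R1 | apply (hA 0) | auto].
  - apply move_to_ok; [now apply (ray_next_In L R1 (S n)) | apply (hA (S n)) | auto].
  - apply move_to_ok; [now apply (ray_next_In L R2 (S n)) | apply (hB (S n)) | auto].
Qed.

Lemma steer_at_root : steer None x = steer_root.
Proof. unfold steer. destruct (excluded_middle_informative (None = None /\ x = x)); tauto. Qed.

Lemma steer_on_R1 n : steer (Some (R1 n)) (R1 (S n)) =
  move_to (R1 (S (S n))) (A (S n)) (L (Some (R1 n)) (R1 (S n))).
Proof.
  unfold steer. destruct (excluded_middle_informative _) as [[h _]|_]; [discriminate|].
  destruct (excluded_middle_informative _) as [_|h]; [|exfalso; apply h; exists n; now split].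
  now rewrite (ray_step_index_eq R1 _ _ n).
Qed.

Lemma steer_on_R2 n : steer (Some (R2 n)) (R2 (S n)) =
  move_to (R2 (S (S n))) (B (S n)) (L (Some (R2 n)) (R2 (S n))).
Proof.
  unfold steer. destruct (excluded_middle_informative _) as [[h _]|_]; [discriminate|].
  destruct (excluded_middle_informative _) as [[m [_ e]]|_].
  { symmetry in e. apply hR12 in e. lia. }
  destruct (excluded_middle_informative _) as [_|h]; [|exfalso; apply h; exists n; now split].
  now rewrite (ray_step_index_eq R2 _ _ n).
Qed.

Lemma steer_R1 n : nth (A n) (steer (ray_parent R1 n) (R1 n)) (R1 n) = R1 (S n).
Proof.
  destruct n as [|n]; simpl.
  - destruct (HL None x (or_introl eq_refl)) as [_ [_ h3]].
    assert (hl : A 0 < length (L None x)) by (rewrite h3; apply (hA 0)).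
    assert (hl' : length (move_to (R1 1) (A 0) (L None x)) = S q)
      by now rewrite move_to_length, h3.
    destruct (index_of_spec _ _ root_has_R2) as [j1 j2].
    assert (hne : A 0 <> index_of (R2 1) (move_to (R1 1) (A 0) (L None x))).
    { intros e. assert (e' : R1 1 = R2 1).
      { rewrite <- (move_to_at (R1 1) (A 0) (L None x) root_has_R1 hl (R1 1)), e at 1.
        now rewrite (nth_indep _ (R1 1) (R2 1)). }
      apply hR12 in e'. lia. }
    rewrite hR10, steer_at_root. unfold steer_root.
    rewrite move_to_other by (rewrite ?hl'; auto using root_has_R2; apply (hA 0)).
    now apply move_to_at; [apply root_has_R1|].
  - rewrite steer_on_R1. apply move_to_at; [now apply (ray_next_In L R1 (S n))|].
    destruct (HL _ _ (ray_parent_ok R1 (S n) hR1)) as [_ [_ h3]]. simpl in h3.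
    rewrite h3. apply (hA (S n)).
Qed.

Lemma steer_R2 n : nth (B n) (steer (ray_parent R2 n) (R2 n)) (R2 n) = R2 (S n).
Proof.
  destruct n as [|n]; simpl.
  - destruct (HL None x (or_introl eq_refl)) as [_ [_ h3]].
    rewrite hR20, steer_at_root. unfold steer_root.
    apply move_to_at; [apply root_has_R2 | rewrite move_to_length, h3; apply (hB 0)].
  - rewrite steer_on_R2. apply move_to_at; [now apply (ray_next_In L R2 (S n))|].
    destruct (HL _ _ (ray_parent_ok R2 (S n) hR2)) as [_ [_ h3]]. simpl in h3.
    rewrite h3. apply (hB (S n)).
Qed.

End Steer.

Lemma decode_ray_index x L R : labeling L -> is_ray X adj R -> R 0 = x -> forall n,
  valid_code (ray_code (ray_index L R) n) /\
  decode x L (ray_code (ray_index L R) n) = (ray_parent R n, R n).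
Proof. intros HL hr h0. apply decode_ray_code; auto. intros n. now apply ray_index_spec. Qed.

Lemma line_rays_meet u i j : is_line X adj u -> fwd u i = back u j -> i = 0 /\ j = 0.
Proof. intros hu e. apply line_inj in e; [lia | auto]. Qed.

Section LineMap.
Variables (L0 : option X -> X -> list X) (u : Z -> X).
Variables (L1 : option X -> X -> list X) (u' : Z -> X).
Hypothesis HL0 : labeling L0.
Hypothesis HL1 : labeling L1.
Hypothesis hu : is_line X adj u.
Hypothesis hu' : is_line X adj u'.

Definition line_labeling :=
  steer (u' 0%Z) L1 (fwd u') (back u') (ray_index L0 (fwd u)) (ray_index L0 (back u)).

Definition line_map := relabel (u 0%Z) L0 (u' 0%Z) line_labeling.

Lemma ray_index_root_neq : ray_index L0 (fwd u) 0 <> ray_index L0 (back u) 0.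
Proof.
  intros e. destruct (ray_index_spec L0 (fwd u) 0 HL0 (fwd_ray u hu)) as [_ h1].
  destruct (ray_index_spec L0 (back u) 0 HL0 (back_ray u hu)) as [_ h2].
  simpl in h1, h2. rewrite e in h1. change (fwd u 0) with (back u 0) in h1.
  rewrite h1 in h2. now apply line_rays_meet in h2.
Qed.

Lemma line_index_bound (R : (Z -> X) -> nat -> X) :
  (forall v, is_line X adj v -> is_ray X adj (R v)) ->
  forall n, ray_index L0 (R u) n < branching (ray_parent (R u') n).
Proof.
  intros hR n. rewrite (branching_ray_parent _ (R u)). now apply ray_index_spec; [|apply hR].
Qed.

Lemma line_labeling_ok : labeling line_labeling.
Proof.
  apply steer_labeling; [exact HL1 | apply fwd_ray, hu' | apply back_ray, hu' | reflexivity
    | reflexivity | apply line_index_bound, fwd_ray | apply line_index_bound, back_ray].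
Qed.

Lemma steer_line_R1 n :
  nth (ray_index L0 (fwd u) n) (line_labeling (ray_parent (fwd u') n) (fwd u' n)) (fwd u' n)
  = fwd u' (S n).
Proof.
  apply steer_R1; [exact HL1 | apply fwd_ray, hu' | apply back_ray, hu' | reflexivity
    | reflexivity | intros i j; now apply line_rays_meet | apply line_index_bound, fwd_ray
    | apply line_index_bound, back_ray | exact ray_index_root_neq].
Qed.

Lemma steer_line_R2 n :
  nth (ray_index L0 (back u) n) (line_labeling (ray_parent (back u') n) (back u' n)) (back u' n)
  = back u' (S n).
Proof.
  apply steer_R2; [exact HL1 | apply fwd_ray, hu' | apply back_ray, hu' | reflexivity
    | reflexivity | intros i j; now apply line_rays_meet | apply line_index_bound, fwd_ray
    | apply line_index_bound, back_ray | exact ray_index_root_neq].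
Qed.

Lemma line_map_aut : is_aut X adj line_map.
Proof. apply relabel_aut; auto using line_labeling_ok. Qed.

Lemma line_map_ray (R : (Z -> X) -> nat -> X) : (forall v, is_line X adj v -> is_ray X adj (R v)) ->
  (forall v, R v 0 = v 0%Z) ->
  (forall n, nth (ray_index L0 (R u) n) (line_labeling (ray_parent (R u') n) (R u' n)) (R u' n)
             = R u' (S n)) ->
  forall n, line_map (R u n) = R u' n.
Proof.
  intros hR hR0 hsteer n.
  destruct (decode_ray_index (u 0%Z) L0 (R u) HL0 (hR u hu) (hR0 u) n) as [hv hD].
  replace (R u n) with (snd (decode (u 0%Z) L0 (ray_code (ray_index L0 (R u)) n))) by now rewrite hD.
  unfold line_map. rewrite relabel_decode by auto.
  assert (hA : forall m, ray_index L0 (R u) m < branching (ray_parent (R u') m) /\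
    nth (ray_index L0 (R u) m) (line_labeling (ray_parent (R u') m) (R u' m)) (R u' m) = R u' (S m))
    by (intros m; split; [now apply line_index_bound | apply hsteer]).
  now rewrite (proj2 (decode_ray_code (u' 0%Z) line_labeling (R u') _ (hR u' hu') (hR0 u') hA n)).
Qed.

Lemma line_map_line z : line_map (u z) = u' z.
Proof.
  destruct (Z_le_gt_dec 0 z).
  - replace z with (Z.of_nat (Z.to_nat z)) by lia.
    exact (line_map_ray fwd fwd_ray (fun _ => eq_refl) steer_line_R1 _).
  - replace z with (- Z.of_nat (Z.to_nat (- z)))%Z by lia.
    exact (line_map_ray back back_ray (fun _ => eq_refl) steer_line_R2 _).
Qed.

End LineMap.

(** * Automorphisms, boundary and geodesics *)

Definition aut_inv (g : Aut adj) : X -> X :=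
  proj1_sig (constructive_indefinite_description _ (proj1 (proj2_sig g))).

Lemma aut_inv_l (g : Aut adj) y : aut_inv g (proj1_sig g y) = y.
Proof. unfold aut_inv. now destruct (constructive_indefinite_description _ _) as [h [h1 h2]]. Qed.

Lemma aut_inv_r (g : Aut adj) y : proj1_sig g (aut_inv g y) = y.
Proof. unfold aut_inv. now destruct (constructive_indefinite_description _ _) as [h [h1 h2]]. Qed.

Lemma aut_adj (g : Aut adj) y z : adj y z <-> adj (proj1_sig g y) (proj1_sig g z).
Proof. apply (proj2 (proj2_sig g)). Qed.

Lemma is_aut_inv g : is_aut X adj (aut_inv g).
Proof.
  split; [exists (proj1_sig g); split; intros; [apply aut_inv_r | apply aut_inv_l]|].
  intros y z. now rewrite (aut_adj g (aut_inv g y)), !aut_inv_r.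
Qed.

Lemma is_aut_comp f g : is_aut X adj f -> is_aut X adj g -> is_aut X adj (fun y => f (g y)).
Proof.
  intros [[fi [f1 f2]] fa] [[gi [g1 g2]] ga]. split.
  - exists (fun y => gi (fi y)). split; intros y; [rewrite f1, g1 | rewrite g2, f2]; auto.
  - intros y z. now rewrite ga, fa.
Qed.

Lemma is_aut_id : is_aut X adj (fun y => y).
Proof. split; [exists (fun y => y) | ]; tauto. Qed.

Lemma is_aut_inj f : is_aut X adj f -> forall a b, f a = f b -> a = b.
Proof. intros [[fi [f1 _]] _] a b e. now rewrite <- (f1 a), <- (f1 b), e. Qed.

Lemma is_aut_ray f r : is_aut X adj f -> is_ray X adj r -> is_ray X adj (fun n => f (r n)).
Proof.
  intros hf hr n. destruct (hr n) as [a b]. split.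
  - now apply (proj1 (proj2 hf _ _)).
  - intros e. now apply b, (is_aut_inj f hf).
Qed.

Lemma is_aut_line f u : is_aut X adj f -> is_line X adj u -> is_line X adj (fun z => f (u z)).
Proof.
  intros hf hu z. destruct (hu z) as [a b]. split.
  - now apply (proj1 (proj2 hf _ _)).
  - intros e. now apply b, (is_aut_inj f hf).
Qed.

Lemma ray_equiv_sym v w : ray_equiv X v w -> ray_equiv X w v.
Proof. intros [k [l h]]. now exists l, k. Qed.

Lemma ray_equiv_ext a a' b b' : (forall n, a n = a' n) -> (forall n, b n = b' n) ->
  ray_equiv X a b -> ray_equiv X a' b'.
Proof. intros ha hb [k [l h]]. exists k, l. intros n. now rewrite <- ha, <- hb. Qed.

Lemma omega_ray (w : Omega adj) r : proj1_sig w r -> is_ray X adj r.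
Proof. destruct w as [A [v [hv ->]]]. now intros []. Qed.

Lemma omega_equiv (w : Omega adj) r r' : proj1_sig w r -> proj1_sig w r' -> ray_equiv X r r'.
Proof.
  destruct w as [A [v [hv ->]]]. intros [_ h1] [_ h2].
  apply (ray_equiv_trans X _ v); auto using ray_equiv_sym.
Qed.

Lemma omega_closed (w : Omega adj) r r' :
  proj1_sig w r -> is_ray X adj r' -> ray_equiv X r r' -> proj1_sig w r'.
Proof.
  destruct w as [A [v [hv ->]]]. intros [_ h1] h2 h3. split; auto.
  now apply (ray_equiv_trans X _ r).
Qed.

Lemma omega_eq (w1 w2 : Omega adj) r : proj1_sig w1 r -> proj1_sig w2 r -> w1 = w2.
Proof.
  intros h1 h2. apply eq_sig_hprop; [intros; apply proof_irrelevance|].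
  apply functional_extensionality; intros r'. apply propositional_extensionality.
  split; intros h.
  - apply (omega_closed w2 r); eauto using omega_ray, omega_equiv.
  - apply (omega_closed w1 r); eauto using omega_ray, omega_equiv.
Qed.

Lemma act_mem (g : Aut adj) (w : Omega adj) r : proj1_sig w r ->
  proj1_sig (act g w) (fun n => proj1_sig g (r n)).
Proof.
  intros h. split.
  - apply is_aut_ray; [apply (proj2_sig g) | now apply (omega_ray w)].
  - exists r. split; auto. apply ray_equiv_refl.
Qed.

Lemma act_mem_inv (g : Aut adj) (w : Omega adj) v : proj1_sig (act g w) v ->
  proj1_sig w (fun n => aut_inv g (v n)).
Proof.
  intros [hv [r [hr he]]]. apply (omega_closed w r); auto.
  - apply is_aut_ray; [apply is_aut_inv | auto].
  - apply (ray_equiv_ext (fun n => aut_inv g (proj1_sig g (r n))) _ (fun n => aut_inv g (v n)));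
      auto using aut_inv_l, ray_equiv_map.
Qed.

Lemma act_eq (g : Aut adj) (w w' : Omega adj) r : proj1_sig w r ->
  proj1_sig w' (fun n => proj1_sig g (r n)) -> act g w = w'.
Proof. intros h1 h2. exact (omega_eq _ _ _ (act_mem g w r h1) h2). Qed.

Lemma act_inj (g : Aut adj) (w w' : Omega adj) : act g w = act g w' -> w = w'.
Proof.
  intros e. destruct (proj2_sig w) as [r [hr hw]].
  assert (hrw : proj1_sig w r) by (rewrite hw; split; [auto | apply ray_equiv_refl]).
  pose proof (act_mem g w r hrw) as h. rewrite e in h. apply act_mem_inv in h.
  apply (omega_eq _ _ r hrw). 
  replace r with (fun n => aut_inv g (proj1_sig g (r n))); auto.
  apply functional_extensionality; intros; apply aut_inv_l.
Qed.

Lemma line_translate u d : is_line X adj u -> is_line X adj (fun z => u (z + d)%Z).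
Proof.
  intros hu z. destruct (hu (z + d)%Z) as [a b].
  now replace (z + 1 + d)%Z with (z + d + 1)%Z by lia;
    replace (z + 2 + d)%Z with (z + d + 2)%Z by lia.
Qed.

Lemma translate_equiv (F : Z -> X) d :
  ray_equiv X (fun n => F (Z.of_nat n)) (fun n => F (Z.of_nat n + d)%Z).
Proof.
  destruct (Z_le_gt_dec 0 d).
  - exists (Z.to_nat d), 0. intros n. f_equal. lia.
  - exists 0, (Z.to_nat (- d)). intros n. f_equal. lia.
Qed.

Lemma geodesic_line (w1 w2 : Omega adj) y : geodesic adj w1 w2 y ->
  exists u, is_line X adj u /\ u 0%Z = y /\ proj1_sig w1 (back u) /\ proj1_sig w2 (fwd u).
Proof.
  intros [u1 [hl [h1 [h2 [z0 <-]]]]].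
  exists (fun z => u1 (z + z0)%Z). split; [|split; [|split]].
  - now apply line_translate.
  - reflexivity.
  - apply (omega_closed w1 _ _ h1); [apply back_ray, line_translate; auto|].
    refine (ray_equiv_ext _ _ _ _ (fun _ => eq_refl) _
      (translate_equiv (fun z => u1 (- z)%Z) (- z0))).
    intros n. unfold back. f_equal. lia.
  - apply (omega_closed w2 _ _ h2); [apply fwd_ray, line_translate; auto|].
    apply translate_equiv.
Qed.

Lemma line_shift (w1 w2 : Omega adj) u u' : is_line X adj u -> is_line X adj u' ->
  proj1_sig w1 (back u) -> proj1_sig w1 (back u') ->
  proj1_sig w2 (fwd u) -> proj1_sig w2 (fwd u') ->
  exists d, forall z, u' z = u (z + d)%Z.
Proof.
  intros hu hu' b1 b2 f1 f2.
  destruct (omega_equiv w1 _ _ b1 b2) as [k [l hb]], (omega_equiv w2 _ _ f1 f2) as [k2 [l2 hf]].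
  unfold back, fwd in hb, hf.
  destruct (nb_walk_unique (k + k2) (fun i => u (- Z.of_nat k + Z.of_nat i)%Z)
                           (l + l2) (fun i => u' (- Z.of_nat l + Z.of_nat i)%Z)) as [e1 e2];
    [apply line_segment; auto | apply line_segment; auto | | |].
  - specialize (hb 0). cbn beta. now rewrite !Z.add_0_r.
  - specialize (hf 0). cbn beta.
    now replace (- Z.of_nat k + Z.of_nat (k + k2))%Z with (Z.of_nat k2) by lia;
      replace (- Z.of_nat l + Z.of_nat (l + l2))%Z with (Z.of_nat l2) by lia.
  - exists (Z.of_nat l - Z.of_nat k)%Z. intros z.
    destruct (Z_le_gt_dec z (- Z.of_nat l)); [|destruct (Z_le_gt_dec (Z.of_nat l2) z)].
    + specialize (hb (Z.to_nat (- z - Z.of_nat l))).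
      replace (- Z.of_nat (Z.to_nat (- z - Z.of_nat l) + l))%Z with z in hb by lia.
      rewrite <- hb. f_equal. lia.
    + specialize (hf (Z.to_nat (z - Z.of_nat l2))).
      replace (Z.of_nat (Z.to_nat (z - Z.of_nat l2) + l2)) with z in hf by lia.
      rewrite <- hf. f_equal. lia.
    + specialize (e2 (Z.to_nat (z + Z.of_nat l)) ltac:(lia)). cbn beta in e2.
      replace (- Z.of_nat l + Z.of_nat (Z.to_nat (z + Z.of_nat l)))%Z with z in e2 by lia.
      rewrite <- e2. f_equal. lia.
Qed.

Lemma line_unique (w1 w2 : Omega adj) u u' : is_line X adj u -> is_line X adj u' ->
  proj1_sig w1 (back u) -> proj1_sig w1 (back u') ->
  proj1_sig w2 (fwd u) -> proj1_sig w2 (fwd u') -> u 0%Z = u' 0%Z ->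
  forall z, u' z = u z.
Proof.
  intros hu hu' b1 b2 f1 f2 e0. destruct (line_shift w1 w2 u u') as [d hd]; auto.
  assert (d = 0%Z) as ->.
  { specialize (hd 0%Z). rewrite <- e0 in hd. apply line_inj in hd; [lia | auto]. }
  intros z. now rewrite hd, Z.add_0_r.
Qed.

Lemma geodesic_on_line (w1 w2 : Omega adj) u y : is_line X adj u -> proj1_sig w1 (back u) ->
  proj1_sig w2 (fwd u) -> geodesic adj w1 w2 y -> exists z, u z = y.
Proof.
  intros hu h1 h2 hg. destruct (geodesic_line w1 w2 y hg) as [u2 [hu2 [<- [b f]]]].
  destruct (line_shift w1 w2 u u2) as [d hd]; auto.
  exists (0 + d)%Z. now rewrite <- hd.
Qed.

Lemma line_geodesic (w1 w2 : Omega adj) u z : is_line X adj u -> proj1_sig w1 (back u) ->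
  proj1_sig w2 (fwd u) -> geodesic adj w1 w2 (u z).
Proof. intros hu h1 h2. exists u. split; [auto | split; [auto | split; [auto | now exists z]]]. Qed.

(** * Automorphisms agreeing with a given one on a ball *)

Lemma decode_ray_length x L R c m : labeling L -> valid_code c -> is_ray X adj R -> R 0 = x ->
  snd (decode x L c) = R m -> length c = m.
Proof.
  intros HL hv hR h0 e.
  destruct (nb_walk_unique (length c) (code_walk x L c) m R) as [-> _]; auto.
  - now apply decode_walk.
  - now apply ray_nb_walk.
  - now rewrite code_walk_0.
  - now rewrite code_walk_last.
Qed.

Lemma decode_agree x L L' N :
  (forall c, valid_code c -> length c < N ->
     L' (fst (decode x L c)) (snd (decode x L c)) = L (fst (decode x L c)) (snd (decode x L c))) ->
  forall c, valid_code c -> length c <= N -> decode x L' c = decode x L c.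
Proof.
  intros H. induction c as [|a c IH]; intros hv hl; [reflexivity|].
  destruct hv as [hv _]. simpl in hl. cbn [decode].
  rewrite IH, H by (auto; lia). reflexivity.
Qed.

Definition aut_transport (g : Aut adj) L := transport (proj1_sig g) (aut_inv g) L.

Lemma aut_transport_labeling g L : labeling L -> labeling (aut_transport g L).
Proof. apply transport_labeling; [apply aut_inv_l | apply aut_inv_r | apply aut_adj]. Qed.

(* In a labeling transported along [g], each step of the image of a ray already
   sits at the index the step has in the original labeling. *)
Lemma aut_transport_ray_index (g : Aut adj) L R n : labeling L -> is_ray X adj R ->
  move_to (proj1_sig g (R (S n))) (ray_index L R n)
    (aut_transport g L (ray_parent (fun k => proj1_sig g (R k)) n) (proj1_sig g (R n)))
  = aut_transport g L (ray_parent (fun k => proj1_sig g (R k)) n) (proj1_sig g (R n)).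
Proof.
  intros HL hR. set (gR := fun k => proj1_sig g (R k)).
  assert (hgR : is_ray X adj gR) by (apply is_aut_ray; [apply (proj2_sig g) | auto]).
  assert (HLg := aut_transport_labeling g L HL).
  destruct (HLg _ _ (ray_parent_ok gR n hgR)) as [h1 [_ h3]].
  destruct (ray_index_spec L R n HL hR) as [i1 i2].
  change (proj1_sig g (R n)) with (gR n).
  apply move_to_id; auto.
  - apply (ray_next_In _ gR n HLg hgR).
  - now rewrite h3, (branching_ray_parent gR R).
  - unfold aut_transport, transport.
    replace (option_map (aut_inv g) (ray_parent gR n)) with (ray_parent R n)
      by (destruct n; unfold gR; simpl; now rewrite ?aut_inv_l).
    unfold gR. rewrite aut_inv_l.
    destruct (HL _ _ (ray_parent_ok R n hR)) as [_ [_ hlen]].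
    rewrite (nth_indep _ _ (proj1_sig g (R n))) by now rewrite length_map, hlen.
    now rewrite map_nth, i2.
Qed.

Section LocalLineMap.
Variables (L0 : option X -> X -> list X) (g : Aut adj) (u v : Z -> X) (N : nat).
Hypothesis HL0 : labeling L0.
Hypothesis hu : is_line X adj u.
Hypothesis hv : is_line X adj v.
Hypothesis hagree : forall z, (- Z.of_nat N - 1 <= z <= Z.of_nat N + 1)%Z -> v z = proj1_sig g (u z).

Lemma steer_step_id (R : (Z -> X) -> nat -> X) c n :
  (forall w, is_line X adj w -> is_ray X adj (R w)) -> (forall w, R w 0 = w 0%Z) ->
  (forall n, n <= S N -> R v n = proj1_sig g (R u n)) ->
  valid_code c -> length c < N ->
  let d := decode (v 0%Z) (aut_transport g L0) c in
  ray_step (R v) (fst d) (snd d) n ->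
  move_to (R v (S (S n))) (ray_index L0 (R u) (S n)) (aut_transport g L0 (fst d) (snd d))
  = aut_transport g L0 (fst d) (snd d).
Proof.
  intros hR hR0 hRa hc hl d [-> ey].
  assert (hn : length c = S n) by (apply (decode_ray_length (v 0%Z) (aut_transport g L0) (R v));
    auto using aut_transport_labeling).
  rewrite ey, !hRa by lia.
  exact (aut_transport_ray_index g L0 (R u) (S n) HL0 (hR u hu)).
Qed.

Lemma line_labeling_agree c : valid_code c -> length c < N ->
  let d := decode (v 0%Z) (aut_transport g L0) c in
  line_labeling L0 u (aut_transport g L0) v (fst d) (snd d)
  = aut_transport g L0 (fst d) (snd d).
Proof.
  intros hc hl d. unfold line_labeling.
  destruct (steer_cases (v 0%Z) (aut_transport g L0) (fwd v) (back v) (ray_index L0 (fwd u))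
      (ray_index L0 (back u)) (fwd_ray v hv) (back_ray v hv) (fst d) (snd d))
    as [->|[[-> [-> ->]]|[[n [hs ->]]|[n [hs ->]]]]].
  - reflexivity.
  - unfold steer_root.
    assert (h0 : v 0%Z = proj1_sig g (u 0%Z)) by (apply hagree; lia).
    assert (hf : fwd v 1 = proj1_sig g (fwd u 1)) by (apply hagree; lia).
    assert (hb : back v 1 = proj1_sig g (back u 1)) by (apply hagree; lia).
    rewrite hf, hb, h0. set (Lg0 := aut_transport g L0 None (proj1_sig g (u 0%Z))).
    assert (E1 : move_to (proj1_sig g (fwd u 1)) (ray_index L0 (fwd u) 0) Lg0 = Lg0)
      by exact (aut_transport_ray_index g L0 (fwd u) 0 HL0 (fwd_ray u hu)).
    assert (E2 : move_to (proj1_sig g (back u 1)) (ray_index L0 (back u) 0) Lg0 = Lg0)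
      by exact (aut_transport_ray_index g L0 (back u) 0 HL0 (back_ray u hu)).
    now rewrite E1, E2.
  - apply (steer_step_id fwd); auto using fwd_ray.
    intros m hm. apply hagree. lia.
  - apply (steer_step_id back); auto using back_ray.
    intros m hm. apply hagree. lia.
Qed.

Lemma line_map_local y : length (encode (u 0%Z) L0 y) <= N ->
  line_map L0 u (aut_transport g L0) v y = proj1_sig g y.
Proof.
  intros hy. destruct (encode_spec (u 0%Z) L0 y HL0) as [hc hyc].
  rewrite <- hyc. unfold line_map. rewrite relabel_decode by auto.
  assert (h0 : v 0%Z = proj1_sig g (u 0%Z)) by (apply hagree; lia).
  rewrite decode_agree with (L := aut_transport g L0) (N := N); auto.
  - rewrite h0. unfold aut_transport. now rewrite decode_transport by apply aut_inv_l.
  - intros c0 hc0 hl0. now apply line_labeling_agree.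
Qed.

End LocalLineMap.

Section Glue.
Variables (v : Z -> X) (N : nat) (r1 r2 : nat -> X).
Hypothesis hv : is_line X adj v.
Hypothesis hr1 : is_ray X adj r1.
Hypothesis hr2 : is_ray X adj r2.
Hypothesis e10 : r1 0 = v (- Z.of_nat N)%Z.
Hypothesis e11 : r1 1 = v (- Z.of_nat N - 1)%Z.
Hypothesis e20 : r2 0 = v (Z.of_nat N).
Hypothesis e21 : r2 1 = v (Z.of_nat N + 1)%Z.

Definition glue (z : Z) : X :=
  if Z_le_gt_dec z (- Z.of_nat N) then r1 (Z.to_nat (- z - Z.of_nat N))
  else if Z_le_gt_dec (Z.of_nat N) z then r2 (Z.to_nat (z - Z.of_nat N)) else v z.

Lemma glue_middle z : (- Z.of_nat N - 1 <= z <= Z.of_nat N + 1)%Z -> glue z = v z.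
Proof.
  intros hz. unfold glue. destruct (Z_le_gt_dec z (- Z.of_nat N)).
  - destruct (Z.eq_dec z (- Z.of_nat N)) as [->|e].
    + now replace (Z.to_nat (- - Z.of_nat N - Z.of_nat N)) with 0 by lia.
    + replace (Z.to_nat (- z - Z.of_nat N)) with 1 by lia. rewrite e11. f_equal. lia.
  - destruct (Z_le_gt_dec (Z.of_nat N) z); auto.
    destruct (Z.eq_dec z (Z.of_nat N)) as [->|e].
    + now replace (Z.to_nat (Z.of_nat N - Z.of_nat N)) with 0 by lia.
    + replace (Z.to_nat (z - Z.of_nat N)) with 1 by lia. rewrite e21. f_equal. lia.
Qed.

Lemma glue_back n : glue (- Z.of_nat (n + N))%Z = r1 n.
Proof.
  unfold glue. destruct (Z_le_gt_dec (- Z.of_nat (n + N)) (- Z.of_nat N)); [|lia].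
  f_equal. lia.
Qed.

Lemma glue_fwd n : glue (Z.of_nat (n + N)) = r2 n.
Proof.
  unfold glue. destruct (Z_le_gt_dec (Z.of_nat (n + N)) (- Z.of_nat N)).
  - assert (n = 0 /\ N = 0) as [-> ->] by lia. simpl. now rewrite e10, e20.
  - destruct (Z_le_gt_dec (Z.of_nat N) (Z.of_nat (n + N))); [|lia]. f_equal. lia.
Qed.

Lemma glue_line : is_line X adj glue.
Proof.
  intros z. destruct (Z_le_gt_dec (z + 2) (- Z.of_nat N)); [|destruct (Z_le_gt_dec (Z.of_nat N) z)].
  - set (m := Z.to_nat (- z - 2 - Z.of_nat N)).
    replace z with (- Z.of_nat (S (S m) + N))%Z by lia.
    replace (- Z.of_nat (S (S m) + N) + 1)%Z with (- Z.of_nat (S m + N))%Z by lia.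
    replace (- Z.of_nat (S (S m) + N) + 2)%Z with (- Z.of_nat (m + N))%Z by lia.
    rewrite !glue_back. destruct (hr1 m) as [a1 b1], (hr1 (S m)) as [a2 b2].
    split; [now apply adj_sym | auto].
  - set (m := Z.to_nat (z - Z.of_nat N)).
    replace z with (Z.of_nat (m + N)) by lia.
    replace (Z.of_nat (m + N) + 1)%Z with (Z.of_nat (S m + N)) by lia.
    replace (Z.of_nat (m + N) + 2)%Z with (Z.of_nat (S (S m) + N)) by lia.
    rewrite !glue_fwd. apply hr2.
  - rewrite !glue_middle by lia. apply hv.
Qed.

End Glue.

(** * Topology *)

Definition pointwise_nbhd (g : Aut adj) (Q : Aut adj -> Prop) :=
  exists F : list X, forall h : Aut adj, (forall y, In y F -> proj1_sig h y = proj1_sig g y) -> Q h.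

Lemma pointwise_nbhd_and g Q1 Q2 :
  pointwise_nbhd g Q1 -> pointwise_nbhd g Q2 -> pointwise_nbhd g (fun h => Q1 h /\ Q2 h).
Proof.
  intros [F1 h1] [F2 h2]. exists (F1 ++ F2). intros h hh.
  split; [apply h1 | apply h2]; intros y hy; apply hh, in_or_app; auto.
Qed.

Lemma pointwise_nbhd_generated {T : Type} (S : (T -> Prop) -> Prop) (f : Aut adj -> T) g :
  (forall B, S B -> B (f g) -> pointwise_nbhd g (fun h => B (f h))) ->
  forall U, generated S U -> U (f g) -> pointwise_nbhd g (fun h => U (f h)).
Proof.
  intros HS U hU hg. destruct (hU (f g) hg) as [l [hl [hin hsub]]].
  assert (H : pointwise_nbhd g (fun h => forall B, In B l -> B (f h))).
  { clear hsub. induction l as [|B l IH].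
    - exists []. intros h _ B [].
    - inversion hl as [|? ? hB hl']; subst.
      destruct (pointwise_nbhd_and g (fun h => B (f h)) (fun h => forall B0, In B0 l -> B0 (f h)))
        as [F hF].
      + apply HS; auto. apply hin; now left.
      + apply IH; auto. intros B2 hB2. apply hin; now right.
      + exists F. intros h hh B0 [<-|hB0]; [apply (proj1 (hF h hh)) | now apply (proj2 (hF h hh))]. }
  destruct H as [F hF]. exists F. intros h hh. now apply hsub, hF.
Qed.

Lemma bd_plus_act_nbhd (w : Omega adj) a b (g : Aut adj) : bd_plus X adj a b (act g w) ->
  pointwise_nbhd g (fun h => bd_plus X adj a b (act h w)).
Proof.
  intros [v [hv [e0 e1]]].
  exists [aut_inv g (v 0); aut_inv g (v 1)]. intros h hh.
  exists (fun n => proj1_sig h (aut_inv g (v n))). split; [now apply act_mem, act_mem_inv|].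
  rewrite !hh by (simpl; auto). now rewrite !aut_inv_r.
Qed.

Lemma bd_plus_act_ray (w : Omega adj) R N (g : Aut adj) : proj1_sig w R ->
  bd_plus X adj (proj1_sig g (R N)) (proj1_sig g (R (S N))) (act g w).
Proof.
  intros hR. exists (fun n => proj1_sig g (R (n + N))). split; [|split; reflexivity].
  apply act_mem, (omega_closed w R); auto.
  - apply ray_shift, (omega_ray w); auto.
  - exists N, 0. intros n. f_equal. lia.
Qed.

Lemma bd_plus_open a b : adj a b -> omega_top X adj (bd_plus X adj a b).
Proof.
  intros hab w hw. exists [bd_plus X adj a b]. split; [|split].
  - constructor; [now exists a, b | constructor].
  - now intros B [<-|[]].
  - intros y hy. apply hy. now left.
Qed.

Definition near_line (v : Z -> X) (N : nat) (t : Omega adj * Omega adj * X) :=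
  bd_plus X adj (v (- Z.of_nat N)%Z) (v (- Z.of_nat N - 1)%Z) (fst (fst t)) /\
  bd_plus X adj (v (Z.of_nat N)) (v (Z.of_nat N + 1)%Z) (snd (fst t)) /\ snd t = v 0%Z.

Lemma near_line_open v N : is_line X adj v ->
  prod_top (prod_top (omega_top X adj) (omega_top X adj)) (discrete_top X) (near_line v N).
Proof.
  intros hv t ht.
  set (B1 := bd_plus X adj (v (- Z.of_nat N)%Z) (v (- Z.of_nat N - 1)%Z)).
  set (B2 := bd_plus X adj (v (Z.of_nat N)) (v (Z.of_nat N + 1)%Z)).
  set (A2 := fun ab : Omega adj * Omega adj => B1 (fst ab) /\ B2 (snd ab)).
  assert (oA : prod_top (omega_top X adj) (omega_top X adj) A2).
  { intros ab hab. exists [fun ab => B1 (fst ab); fun ab => B2 (snd ab)]. split; [|split].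
    - constructor; [left; exists B1 | constructor; [right; exists B2 | constructor]]; split; auto.
      + apply bd_plus_open, adj_sym. destruct (hv (- Z.of_nat N - 1)%Z) as [a _].
        now replace (- Z.of_nat N - 1 + 1)%Z with (- Z.of_nat N)%Z in a by lia.
      + apply bd_plus_open, hv.
    - intros B [<-|[<-|[]]]; apply hab.
    - intros y hy.
      split; [apply (hy _ (or_introl eq_refl)) | apply (hy _ (or_intror (or_introl eq_refl)))]. }
  exists [fun t => A2 (fst t); fun t => snd t = v 0%Z]. split; [|split].
  - constructor; [left; now exists A2|].
    constructor; [right; now exists (fun y => y = v 0%Z) | constructor].
  - destruct ht as [h1 [h2 h3]]. intros B [<-|[<-|[]]]; [split | ]; auto.
  - intros y hy. destruct (hy _ (or_introl eq_refl)) as [y1 y2].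
    split; [auto | split; [auto | apply (hy _ (or_intror (or_introl eq_refl)))]].
Qed.

Fixpoint code_radius (x : X) L (F : list X) : nat :=
  match F with [] => 0 | y :: F' => max (length (encode x L y)) (code_radius x L F') end.

Lemma code_radius_spec x L y F : In y F -> length (encode x L y) <= code_radius x L F.
Proof. induction F as [|a F IH]; simpl; [tauto|]. intros [<-|h]; [lia | specialize (IH h); lia]. Qed.

Section Homeomorphism.
Variables (wm wp : Omega adj) (u0 : Z -> X).
Hypothesis hne : wm <> wp.
Hypothesis hu0 : is_line X adj u0.
Hypothesis hb0 : proj1_sig wm (back u0).
Hypothesis hf0 : proj1_sig wp (fwd u0).

Definition triple (g : Aut adj) : Omega adj * Omega adj * X :=
  (act g wm, act g wp, proj1_sig g (u0 0%Z)).

Lemma aut_line_spec (g : Aut adj) :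
  is_line X adj (fun z => proj1_sig g (u0 z)) /\
  proj1_sig (act g wm) (back (fun z => proj1_sig g (u0 z))) /\
  proj1_sig (act g wp) (fwd (fun z => proj1_sig g (u0 z))).
Proof.
  split; [apply is_aut_line; [apply (proj2_sig g) | auto]|].
  split; [exact (act_mem g wm _ hb0) | exact (act_mem g wp _ hf0)].
Qed.

Lemma triple_of_line (g : Aut adj) u w1 w2 : (forall z, proj1_sig g (u0 z) = u z) ->
  proj1_sig w1 (back u) -> proj1_sig w2 (fwd u) -> triple g = (w1, w2, u 0%Z).
Proof.
  intros H h1 h2. unfold triple. rewrite H. do 2 f_equal.
  - apply (act_eq g wm w1 (back u0) hb0).
    replace (fun n => proj1_sig g (back u0 n)) with (back u); auto.
    apply functional_extensionality; intros n. apply eq_sym, H.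
  - apply (act_eq g wp w2 (fwd u0) hf0).
    replace (fun n => proj1_sig g (fwd u0 n)) with (fwd u); auto.
    apply functional_extensionality; intros n. apply eq_sym, H.
Qed.

Lemma triple_P g : P_pred X adj (triple g).
Proof.
  destruct (aut_line_spec g) as [hl [hb hf]]. split.
  - intros e. now apply hne, (act_inj g).
  - exact (line_geodesic _ _ _ 0%Z hl hb hf).
Qed.

Lemma triple_eq_iff g1 g2 :
  triple g1 = triple g2 <-> forall z, proj1_sig g1 (u0 z) = proj1_sig g2 (u0 z).
Proof.
  destruct (aut_line_spec g1) as [hl1 [hb1 hf1]], (aut_line_spec g2) as [hl2 [hb2 hf2]].
  split; intros e.
  - assert (e1 : act g1 wm = act g2 wm) by exact (f_equal (fun t => fst (fst t)) e).
    assert (e2 : act g1 wp = act g2 wp) by exact (f_equal (fun t => snd (fst t)) e).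
    assert (e3 : proj1_sig g1 (u0 0%Z) = proj1_sig g2 (u0 0%Z)) by exact (f_equal snd e).
    intros z. symmetry. revert z.
    apply (line_unique (act g1 wm) (act g1 wp)); auto; [rewrite e1 | rewrite e2]; auto.
  - unfold triple at 2. now apply (triple_of_line g1 (fun z => proj1_sig g2 (u0 z))).
Qed.

Lemma coset_pred_sub g g' : (forall z, proj1_sig g (u0 z) = proj1_sig g' (u0 z)) ->
  forall h, coset_pred X adj wm wp g h -> coset_pred X adj wm wp g' h.
Proof.
  intros hag h [m [hm hh]].
  exists (exist _ (fun y => aut_inv g' (proj1_sig g (proj1_sig m y)))
            (is_aut_comp _ _ (is_aut_inv g') (is_aut_comp _ _ (proj2_sig g) (proj2_sig m)))).
  split; [intros y hy | intros y]; simpl.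
  - rewrite (hm y hy). destruct (geodesic_on_line wm wp u0 y hu0 hb0 hf0 hy) as [z <-].
    now rewrite hag, aut_inv_l.
  - now rewrite aut_inv_r.
Qed.

Lemma coset_eq_iff g1 g2 :
  coset adj wm wp g1 = coset adj wm wp g2 <-> forall z, proj1_sig g1 (u0 z) = proj1_sig g2 (u0 z).
Proof.
  split; intros e.
  - assert (h : coset_pred X adj wm wp g2 g2).
    { exists (exist _ (fun y => y) is_aut_id). split; [intros y _ | intros y]; reflexivity. }
    apply (f_equal (@proj1_sig _ _)) in e. simpl in e. rewrite <- e in h.
    destruct h as [m [hm hgm]]. intros z. rewrite hgm, hm; auto. apply line_geodesic; auto.
  - apply eq_sig_hprop; [intros; apply proof_irrelevance|]. simpl.
    apply functional_extensionality; intros h; apply propositional_extensionality.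
    split; apply coset_pred_sub; intros z; auto.
Qed.

Lemma coset_eq_iff_triple_eq g1 g2 :
  coset adj wm wp g1 = coset adj wm wp g2 <-> triple g1 = triple g2.
Proof. now rewrite coset_eq_iff, triple_eq_iff. Qed.

Lemma triple_surj (t : Pspace adj) : exists g, triple g = proj1_sig t.
Proof.
  destruct t as [[[w1 w2] x] [hn hg]]. simpl in *.
  destruct (geodesic_line w1 w2 x hg) as [u [hu [<- [hb hf]]]].
  exists (exist _ (line_map std_labeling u0 std_labeling u)
    (line_map_aut std_labeling u0 std_labeling u std_labeling_ok std_labeling_ok hu0 hu)).
  apply triple_of_line; auto. intros z. apply line_map_line; auto using std_labeling_ok.
Qed.

Lemma triple_local_surj (g : Aut adj) F (t : Pspace adj) :
  near_line (fun z => proj1_sig g (u0 z)) (code_radius (u0 0%Z) std_labeling F) (proj1_sig t) ->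
  exists h : Aut adj, triple h = proj1_sig t /\ forall y, In y F -> proj1_sig h y = proj1_sig g y.
Proof.
  set (v := fun z => proj1_sig g (u0 z)). set (N := code_radius (u0 0%Z) std_labeling F).
  destruct t as [[[w1 w2] x] hP]. simpl. intros [[r1 [hr1 [e10 e11]]] [[r2 [hr2 [e20 e21]]] ex]].
  simpl in ex. subst x.
  destruct (aut_line_spec g) as [hv _]. fold v in hv.
  pose proof (omega_ray w1 r1 hr1) as hr1'. pose proof (omega_ray w2 r2 hr2) as hr2'.
  set (v' := glue v N r1 r2).
  assert (hv' : is_line X adj v') by now apply glue_line.
  assert (hagree : forall z, (- Z.of_nat N - 1 <= z <= Z.of_nat N + 1)%Z -> v' z = v z)
    by (intros z; now apply glue_middle).
  assert (hbv : proj1_sig w1 (back v')).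
  { apply (omega_closed w1 r1); auto using back_ray. exists 0, N. intros n. unfold back.
    unfold v'. rewrite glue_back. f_equal. lia. }
  assert (hfv : proj1_sig w2 (fwd v')).
  { apply (omega_closed w2 r2); auto using fwd_ray. exists 0, N. intros n. unfold fwd.
    unfold v'. rewrite glue_fwd by auto. f_equal. lia. }
  set (Lg := aut_transport g std_labeling).
  assert (HLg : labeling Lg) by exact (aut_transport_labeling g _ std_labeling_ok).
  exists (exist _ (line_map std_labeling u0 Lg v')
    (line_map_aut std_labeling u0 Lg v' std_labeling_ok HLg hu0 hv')).
  split.
  - simpl. replace (v 0%Z) with (v' 0%Z) by (apply hagree; lia).
    apply triple_of_line; auto.
    intros z. exact (line_map_line _ _ _ _ std_labeling_ok HLg hu0 hv' z).
  - intros y hy. apply (line_map_local _ _ _ _ N); [exact std_labeling_ok | auto ..].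
    now apply code_radius_spec.
Qed.

Definition rep (C : GmodM adj wm wp) : Aut adj :=
  proj1_sig (constructive_indefinite_description _ (proj2_sig C)).

Lemma coset_rep C : coset adj wm wp (rep C) = C.
Proof.
  apply eq_sig_hprop; [intros; apply proof_irrelevance|]. unfold rep. simpl.
  now destruct (constructive_indefinite_description _ _).
Qed.

Definition psi (C : GmodM adj wm wp) : Pspace adj := exist _ (triple (rep C)) (triple_P (rep C)).

Lemma psi_coset g : proj1_sig (psi (coset adj wm wp g)) = triple g.
Proof. apply coset_eq_iff_triple_eq. apply coset_rep. Qed.

Definition phi (t : Pspace adj) : GmodM adj wm wp :=
  coset adj wm wp (proj1_sig (constructive_indefinite_description _ (triple_surj t))).

Lemma phi_spec t : exists g, phi t = coset adj wm wp g /\ triple g = proj1_sig t.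
Proof. unfold phi. destruct (constructive_indefinite_description _ _) as [g e]. eauto. Qed.

Lemma psi_phi t : psi (phi t) = t.
Proof.
  destruct (phi_spec t) as [g [-> e]].
  apply eq_sig_hprop; [intros; apply proof_irrelevance|]. now rewrite psi_coset.
Qed.

Lemma phi_psi C : phi (psi C) = C.
Proof.
  destruct (phi_spec (psi C)) as [g [-> e]]. rewrite <- (coset_rep C).
  now apply coset_eq_iff_triple_eq.
Qed.

Lemma psi_continuous : continuous_top (GmodM_top adj wm wp) (P_top adj) psi.
Proof.
  intros V [W [hW hiff]] g hg.
  assert (hWg : W (triple g)) by (rewrite <- psi_coset; now apply hiff).
  assert (H : pointwise_nbhd g (fun h => W (triple h))).
  { refine (pointwise_nbhd_generated _ triple g _ W hW hWg). intros B hB hBg.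
    destruct hB as [[U [hU ->]]|[V0 [_ ->]]]; cbv beta in *.
    - refine (pointwise_nbhd_generated _ (fun h => fst (triple h)) g _ U hU hBg). intros B hB hBg'.
      destruct hB as [[U1 [hU1 ->]]|[U2 [hU2 ->]]]; cbv beta in *.
      + refine (pointwise_nbhd_generated _ (fun h => fst (fst (triple h))) g _ U1 hU1 hBg').
        intros B [a [b [_ ->]]] hBg''. now apply bd_plus_act_nbhd.
      + refine (pointwise_nbhd_generated _ (fun h => snd (fst (triple h))) g _ U2 hU2 hBg').
        intros B [a [b [_ ->]]] hBg''. now apply bd_plus_act_nbhd.
    - exists [u0 0%Z]. intros h hh. simpl. now rewrite hh by now left. }
  destruct H as [F hF]. exists F. intros h hh. apply hiff. rewrite psi_coset. now apply hF.
Qed.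

Lemma phi_continuous : continuous_top (P_top adj) (GmodM_top adj wm wp) phi.
Proof.
  intros U hU.
  exists (fun p => exists v N, is_line X adj v /\ near_line v N p /\
            forall t : Pspace adj, near_line v N (proj1_sig t) -> U (phi t)).
  split.
  - intros p [v [N [hv [hc hall]]]].
    destruct (near_line_open v N hv p hc) as [l [hl [hin hsub]]].
    exists l. split; [auto | split; [auto|]]. intros y hy. exists v, N. auto.
  - intros t. split; [|now intros [v [N [hv [hc hall]]]]; apply hall].
    intros hUt. destruct (phi_spec t) as [g [e1 e2]]. rewrite e1 in hUt.
    destruct (hU g hUt) as [F hF].
    destruct (aut_line_spec g) as [hl [hb hf]].
    set (N := code_radius (u0 0%Z) std_labeling F).
    exists (fun z => proj1_sig g (u0 z)), N. split; [auto | split].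
    + rewrite <- e2. split; [|split; [|reflexivity]].
      * replace (- Z.of_nat N - 1)%Z with (- Z.of_nat (S N))%Z by lia.
        exact (bd_plus_act_ray wm (back u0) N g hb0).
      * replace (Z.of_nat N + 1)%Z with (Z.of_nat (S N)) by lia.
        exact (bd_plus_act_ray wp (fwd u0) N g hf0).
    + intros t' hc. destruct (triple_local_surj g F t' hc) as [h [eh hag]].
      destruct (phi_spec t') as [g' [-> e2']].
      replace (coset adj wm wp g') with (coset adj wm wp h).
      * apply hF. intros y hy. now apply hag.
      * apply coset_eq_iff_triple_eq. now rewrite eh, e2'.
Qed.

End Homeomorphism.

End RegularTree.

Theorem proposition2p5 (X : Type) (adj : X -> X -> Prop) (q : nat) (hq : 2 <= q)
  (htree : regular_tree adj q) (o : X) (wm wp : Omega adj)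
  (hne : wm <> wp) (ho : geodesic adj wm wp o) :
  exists psi : GmodM adj wm wp -> Pspace adj,
    (forall g : Aut adj,
        proj1_sig (psi (coset adj wm wp g)) = (act g wm, act g wp, proj1_sig g o)) /\
    homeomorphism (GmodM_top adj wm wp) (P_top adj) psi.
Proof.
  destruct (geodesic_line X adj q htree wm wp o ho) as [u0 [hu0 [<- [hb0 hf0]]]].
  exists (psi X adj wm wp u0 hne hu0 hb0 hf0). split.
  - exact (psi_coset X adj q htree wm wp u0 hne hu0 hb0 hf0).
  - exists (phi X adj q htree wm wp u0 hu0 hb0 hf0).
    split; [apply phi_psi | split; [apply psi_phi | split]].
    + exact (psi_continuous X adj q htree wm wp u0 hne hu0 hb0 hf0).
    + apply phi_continuous.
Qed.
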